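(* Let $\nu\ge1$, $d:\mathbb{Z}^\nu\to\mathbb{C}$ bounded, $J=J_0+D$ on $\ell^2(\mathbb{Z}^\nu)$. If $\Im(d(k))\to0$ as $\|k\|_1\to\infty$, then every boundary eigenvalue of $J$ is real.
   Context: $\|k\|_1=\sum_{j=1}^\nu|k_j|$. $J_0$ is the discrete Laplacian on $\ell^2(\mathbb{Z}^\nu)$: $(J_0u)(k)=\sum_{l\in\mathbb{Z}^\nu:\|l\|_1=1}u(k+l)$. $D$ is multiplication by $d$. The numerical range is $\operatorname{Num}(J)=\{\langle Ju,u\rangle:\|u\|=1\}$, and a boundary eigenvalue of $J$ is an eigenvalue of $J$ lying in the topological boundary of $\operatorname{Num}(J)$. *)

From Stdlib Require Import Reals Lra ZArith List.
Import ListNotations.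
Open Scope R_scope.

Record Cx : Type := mkC { Re : R; Im : R }.
Definition RtoC (x : R) : Cx := mkC x 0.
Definition C0 : Cx := RtoC 0.
Definition Cadd (z w : Cx) : Cx := mkC (Re z + Re w) (Im z + Im w).
Definition Csub (z w : Cx) : Cx := mkC (Re z - Re w) (Im z - Im w).
Definition Cmul (z w : Cx) : Cx :=
  mkC (Re z * Re w - Im z * Im w) (Re z * Im w + Im z * Re w).
Definition Cconj (z : Cx) : Cx := mkC (Re z) (- Im z).
Definition Cnorm (z : Cx) : R := sqrt (Re z * Re z + Im z * Im z).

Definition valid (nu : nat) (k : list Z) : Prop := length k = nu.

Definition norm1 (k : list Z) : Z := fold_right (fun x acc => (Z.abs x + acc)%Z) 0%Z k.

Fixpoint addAt (k : list Z) (i : nat) (s : Z) : list Z :=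
  match k, i with
  | nil, _ => nil
  | x :: k', O => (x + s)%Z :: k'
  | x :: k', S i' => x :: addAt k' i' s
  end.

Definition Csum (f : list Z -> Cx) (F : list (list Z)) : Cx :=
  fold_right (fun k acc => Cadd (f k) acc) C0 F.

Definition HasSumOn (P : list Z -> Prop) (f : list Z -> Cx) (S : Cx) : Prop :=
  forall eps, eps > 0 ->
    exists F0, NoDup F0 /\ Forall P F0 /\
      forall F, NoDup F -> Forall P F -> incl F0 F ->
        Cnorm (Csub (Csum f F) S) < eps.

Definition l2 (nu : nat) (u : list Z -> Cx) : Prop :=
  exists S, HasSumOn (valid nu) (fun k => RtoC (Cnorm (u k) ^ 2)) S.

(* (J0 u)(k) = sum_{||l||_1 = 1} u(k+l) = sum_{i<nu} (u(k+e_i) + u(k-e_i)) *)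
Definition J0 (nu : nat) (u : list Z -> Cx) (k : list Z) : Cx :=
  fold_right (fun i acc => Cadd (Cadd (u (addAt k i 1%Z)) (u (addAt k i (-1)%Z))) acc)
    C0 (seq 0 nu).

Definition Jop (nu : nat) (d : list Z -> Cx) (u : list Z -> Cx) (k : list Z) : Cx :=
  Cadd (J0 nu u k) (Cmul (d k) (u k)).

Definition NumRange (nu : nat) (d : list Z -> Cx) (z : Cx) : Prop :=
  exists u : list Z -> Cx,
    HasSumOn (valid nu) (fun k => RtoC (Cnorm (u k) ^ 2)) (RtoC 1) /\
    HasSumOn (valid nu) (fun k => Cmul (Jop nu d u k) (Cconj (u k))) z.

Definition is_eigenvalue (nu : nat) (d : list Z -> Cx) (lam : Cx) : Prop :=
  exists u : list Z -> Cx,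
    l2 nu u /\ (exists k, valid nu k /\ u k <> C0) /\
    forall k, valid nu k -> Jop nu d u k = Cmul lam (u k).

Definition in_closure (A : Cx -> Prop) (z : Cx) : Prop :=
  forall eps, eps > 0 -> exists w, A w /\ Cnorm (Csub w z) < eps.
Definition in_interior (A : Cx -> Prop) (z : Cx) : Prop :=
  exists eps, eps > 0 /\ forall w, Cnorm (Csub w z) < eps -> A w.
Definition in_boundary (A : Cx -> Prop) (z : Cx) : Prop :=
  in_closure A z /\ ~ in_interior A z.

Definition boundary_eigenvalue (nu : nat) (d : list Z -> Cx) (lam : Cx) : Prop :=
  is_eigenvalue nu d lam /\ in_boundary (NumRange nu d) lam.

From Stdlib Require Import Reals Lra Lia Psatz ZArith List Permutation Classical.
Import ListNotations.
Open Scope R_scope.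

(* Let J u = lam u with u <> 0 in l^2 and suppose Im lam <> 0; we show that
   lam is an interior point of Num(J).
   1. An eigenvector of J has unbounded support: at a support point k of
      maximal binary weight, the eigen-equation at k + e_(nu-1) forces u(k) = 0.
      Hence u(m) <> 0 at some m with |Im d(m)| < |Im lam|, and the support has
      a second point, so |u(m)|^2 < ||u||^2.
   2. For x = a u + b delta_m, both ||x||^2 and <J x, x> are explicit in (a, b);
      after Gram-Schmidt they read s p^2 + rho |q|^2 and
      lam s p^2 + p q c + |q|^2 e, where rho > 0 and
      c = <(J - lam) delta_m, u> = 2 i (Im d(m) - Im lam) conj(u m) <> 0.
   3. The numerical range of such a compression contains a disk around lam
      (an intermediate value argument), so lam is not a boundary point. *)

Lemma Cx_eq z w : Re z = Re w -> Im z = Im w -> z = w.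
Proof. destruct z, w; simpl; intros; subst; reflexivity. Qed.

Definition Cnorm2 (z : Cx) : R := Re z * Re z + Im z * Im z.

Lemma Cnorm_ge0 z : 0 <= Cnorm z.
Proof. apply sqrt_pos. Qed.

Lemma Cnorm_sq z : Cnorm z * Cnorm z = Cnorm2 z.
Proof. unfold Cnorm, Cnorm2. apply sqrt_sqrt. nra. Qed.

Lemma Cnorm2_pos z : z <> C0 -> Cnorm2 z > 0.
Proof.
  intros Hz. unfold Cnorm2.
  destruct (Req_dec (Re z) 0), (Req_dec (Im z) 0); try nra.
  exfalso; apply Hz, Cx_eq; simpl; auto.
Qed.

Lemma RtoC_Cnorm_sq z : RtoC (Cnorm z ^ 2) = Cmul z (Cconj z).
Proof.
  apply Cx_eq; simpl; rewrite ?Rmult_1_r, ?Cnorm_sq; unfold Cnorm2; ring.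
Qed.

Lemma Cnorm_mul z w : Cnorm (Cmul z w) = Cnorm z * Cnorm w.
Proof. unfold Cnorm. rewrite <- sqrt_mult by nra. f_equal. simpl. ring. Qed.

Lemma Cnorm_tri z w : Cnorm (Cadd z w) <= Cnorm z + Cnorm w.
Proof.
  pose proof (Cnorm_sq z) as Hz. pose proof (Cnorm_sq w) as Hw.
  unfold Cnorm2 in Hz, Hw.
  pose proof (Cnorm_ge0 z). pose proof (Cnorm_ge0 w).
  assert (Cauchy_Schwarz : Re z * Re w + Im z * Im w <= Cnorm z * Cnorm w).
  { destruct (Rle_dec (Re z * Re w + Im z * Im w) 0); [nra|].
    apply Rsqr_incr_0_var; [|nra]. unfold Rsqr.
    replace (Cnorm z * Cnorm w * (Cnorm z * Cnorm w)) with
      ((Cnorm z * Cnorm z) * (Cnorm w * Cnorm w)) by ring.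
    rewrite Hz, Hw. pose proof (pow2_ge_0 (Re z * Im w - Im z * Re w)). nra. }
  unfold Cnorm at 1. rewrite <- (sqrt_Rsqr (Cnorm z + Cnorm w)) by lra.
  apply sqrt_le_1_alt. unfold Rsqr. simpl. nra.
Qed.

Lemma Re_le_Cnorm z : Rabs (Re z) <= Cnorm z.
Proof. rewrite <- sqrt_Rsqr_abs. apply sqrt_le_1_alt. unfold Rsqr. nra. Qed.

Lemma Im_le_Cnorm z : Rabs (Im z) <= Cnorm z.
Proof. rewrite <- sqrt_Rsqr_abs. apply sqrt_le_1_alt. unfold Rsqr. nra. Qed.

Lemma Cnorm_C0 : Cnorm C0 = 0.
Proof. unfold Cnorm. simpl. replace (0*0+0*0) with 0 by ring. apply sqrt_0. Qed.

Lemma Csum_ext P f g F :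
  (forall k, P k -> f k = g k) -> Forall P F -> Csum f F = Csum g F.
Proof. intros H HF. induction HF; simpl; auto. rewrite H, IHHF; auto. Qed.

Lemma Csum_add f g F :
  Csum (fun k => Cadd (f k) (g k)) F = Cadd (Csum f F) (Csum g F).
Proof.
  induction F; simpl; [|rewrite IHF]; apply Cx_eq; simpl; ring.
Qed.

Lemma Csum_scale c f F : Csum (fun k => Cmul c (f k)) F = Cmul c (Csum f F).
Proof.
  induction F; simpl; [|rewrite IHF]; apply Cx_eq; simpl; ring.
Qed.

Lemma Csum_perm f A B : Permutation A B -> Csum f A = Csum f B.
Proof.
  induction 1; simpl; try congruence. apply Cx_eq; simpl; ring.
Qed.

Lemma Csum_filter_split (p : list Z -> bool) f F :
  Csum f F = Cadd (Csum f (filter p F)) (Csum f (filter (fun x => negb (p x)) F)).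
Proof.
  induction F; simpl. apply Cx_eq; simpl; ring.
  destruct (p a); simpl; rewrite IHF; apply Cx_eq; simpl; ring.
Qed.

Definition inL (L : list (list Z)) (k : list Z) : bool :=
  if in_dec (list_eq_dec Z.eq_dec) k L then true else false.

Lemma filter_inL_perm L F : NoDup L -> NoDup F -> incl L F ->
  Permutation (filter (inL L) F) L.
Proof.
  intros HL HF Hi. apply NoDup_Permutation; [apply NoDup_filter; auto | auto |].
  intros x. rewrite filter_In. unfold inL.
  destruct (in_dec (list_eq_dec Z.eq_dec) x L); split; intros H.
  - tauto.
  - split; auto.
  - destruct H; discriminate.
  - contradiction.
Qed.

Lemma Csum_support f L F : NoDup L -> NoDup F -> incl L F ->
  (forall k, In k F -> ~ In k L -> f k = C0) -> Csum f F = Csum f L.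
Proof.
  intros HL HF Hi H.
  rewrite (Csum_filter_split (inL L)), (Csum_perm _ _ L (filter_inL_perm L F HL HF Hi)).
  assert (Hrest : forall G, (forall k, In k G -> ~ In k L -> f k = C0) ->
            Csum f (filter (fun x => negb (inL L x)) G) = C0).
  { induction G as [|a G IH]; intros HG; simpl; auto. unfold inL at 1.
    assert (HG' : forall k, In k G -> ~ In k L -> f k = C0)
      by (intros; apply HG; simpl; auto).
    destruct (in_dec (list_eq_dec Z.eq_dec) a L) as [Ha|Ha]; simpl; auto.
    rewrite HG, IH; simpl; auto. apply Cx_eq; simpl; ring. }
  rewrite Hrest by auto. apply Cx_eq; simpl; ring.
Qed.

Lemma HS_ext P f g S :
  (forall k, P k -> f k = g k) -> HasSumOn P f S -> HasSumOn P g S.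
Proof.
  intros H HS eps He. destruct (HS eps He) as [F0 [H1 [H2 H3]]].
  exists F0; repeat split; auto. intros F HF HP Hi.
  rewrite <- (Csum_ext P f g F); auto.
Qed.

Definition union (A B : list (list Z)) := nodup (list_eq_dec Z.eq_dec) (A ++ B).

Lemma union_prop P A B : Forall P A -> Forall P B ->
  NoDup (union A B) /\ Forall P (union A B) /\ incl A (union A B) /\ incl B (union A B).
Proof.
  intros HA HB. unfold union. split; [apply NoDup_nodup|].
  rewrite Forall_forall in *. split.
  - intros x Hx. apply nodup_In, in_app_or in Hx. destruct Hx; auto.
  - split; intros x Hx; apply nodup_In, in_or_app; auto.
Qed.

Lemma HS_add P f g S T : HasSumOn P f S -> HasSumOn P g T ->
  HasSumOn P (fun k => Cadd (f k) (g k)) (Cadd S T).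
Proof.
  intros Hf Hg eps He.
  destruct (Hf (eps/2)) as [A [A1 [A2 A3]]]; [lra|].
  destruct (Hg (eps/2)) as [B [B1 [B2 B3]]]; [lra|].
  destruct (union_prop P A B A2 B2) as [N1 [N2 [N3 N4]]].
  exists (union A B); repeat split; auto.
  intros F HF HP Hi. rewrite Csum_add.
  replace (Csub (Cadd (Csum f F) (Csum g F)) (Cadd S T)) with
    (Cadd (Csub (Csum f F) S) (Csub (Csum g F) T)) by (apply Cx_eq; simpl; ring).
  eapply Rle_lt_trans; [apply Cnorm_tri|].
  assert (Cnorm (Csub (Csum f F) S) < eps/2) by (apply A3; eauto using incl_tran).
  assert (Cnorm (Csub (Csum g F) T) < eps/2) by (apply B3; eauto using incl_tran).
  lra.
Qed.

Lemma HS_scale P f S c :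
  HasSumOn P f S -> HasSumOn P (fun k => Cmul c (f k)) (Cmul c S).
Proof.
  intros Hf eps He. pose proof (Cnorm_ge0 c).
  destruct (Hf (eps / (Cnorm c + 1))) as [A [A1 [A2 A3]]].
  { apply Rdiv_lt_0_compat; lra. }
  exists A; repeat split; auto. intros F HF HP Hi. rewrite Csum_scale.
  replace (Csub (Cmul c (Csum f F)) (Cmul c S)) with (Cmul c (Csub (Csum f F) S))
    by (apply Cx_eq; simpl; ring).
  rewrite Cnorm_mul. specialize (A3 F HF HP Hi).
  pose proof (Cnorm_ge0 (Csub (Csum f F) S)).
  apply Rle_lt_trans with ((Cnorm c + 1) * Cnorm (Csub (Csum f F) S)); [nra|].
  apply Rlt_le_trans with ((Cnorm c + 1) * (eps / (Cnorm c + 1))).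
  - apply Rmult_lt_compat_l; lra.
  - right. field. lra.
Qed.

Lemma HS_fin P f L : NoDup L -> Forall P L ->
  (forall k, P k -> ~ In k L -> f k = C0) -> HasSumOn P f (Csum f L).
Proof.
  intros HL HP H eps He. exists L; repeat split; auto.
  intros F HF HPF Hi. rewrite (Csum_support f L F); auto.
  - replace (Csub (Csum f L) (Csum f L)) with C0 by (apply Cx_eq; simpl; ring).
    rewrite Cnorm_C0; lra.
  - intros k Hk Hn. apply H; auto. rewrite Forall_forall in HPF; auto.
Qed.

Lemma HS_single P f m :
  P m -> (forall k, P k -> k <> m -> f k = C0) -> HasSumOn P f (f m).
Proof.
  intros Hm H. replace (f m) with (Csum f [m]) by (simpl; apply Cx_eq; simpl; ring).
  apply HS_fin; repeat constructor; auto.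
  intros k Hk Hn. apply H; auto. intros ->; apply Hn; simpl; auto.
Qed.

Lemma HS_lower P g S L : (forall k, 0 <= g k) ->
  HasSumOn P (fun k => RtoC (g k)) S -> NoDup L -> Forall P L ->
  Im S = 0 /\ Re (Csum (fun k => RtoC (g k)) L) <= Re S.
Proof.
  intros Hg HS HL HPL.
  assert (Sum_real : forall F, Im (Csum (fun k => RtoC (g k)) F) = 0).
  { induction F; simpl; [|rewrite IHF]; ring. }
  assert (Sum_nonneg : forall F, 0 <= Re (Csum (fun k => RtoC (g k)) F)).
  { induction F; simpl; [lra|]. specialize (Hg a). lra. }
  assert (Approx : forall eps, eps > 0 -> exists F, NoDup F /\ incl L F /\
            Cnorm (Csub (Csum (fun k => RtoC (g k)) F) S) < eps).
  { intros eps He. destruct (HS eps He) as [A [A1 [A2 A3]]].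
    destruct (union_prop P A L A2 HPL) as [N1 [N2 [N3 N4]]].
    exists (union A L); repeat split; auto. }
  split.
  - destruct (Req_dec (Im S) 0) as [|Hn]; auto. exfalso.
    destruct (Approx (Rabs (Im S))) as [F [_ [_ HF]]]; [apply Rabs_pos_lt; auto|].
    pose proof (Im_le_Cnorm (Csub (Csum (fun k => RtoC (g k)) F) S)) as H. simpl in H.
    rewrite Sum_real, Rminus_0_l, Rabs_Ropp in H. lra.
  - apply Rnot_lt_le. intros Hlt.
    destruct (Approx (Re (Csum (fun k => RtoC (g k)) L) - Re S)) as [F [F1 [F2 HF]]];
      [lra|].
    pose proof (Re_le_Cnorm (Csub (Csum (fun k => RtoC (g k)) F) S)) as H. simpl in H.
    rewrite (Csum_filter_split (inL L)),
      (Csum_perm _ _ L (filter_inL_perm L F HL F1 F2)) in H, HF. simpl in H.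
    set (rest := Re (Csum (fun k => RtoC (g k)) (filter (fun x => negb (inL L x)) F))) in H.
    pose proof (Sum_nonneg (filter (fun x => negb (inL L x)) F)).
    pose proof (Rle_abs (Re (Csum (fun k => RtoC (g k)) L) + rest - Re S)).
    unfold rest in *. lra.
Qed.

(** * Eigenvectors of J cannot have bounded support *)

Lemma addAt_length k i s : length (addAt k i s) = length k.
Proof. revert i; induction k; intros [|i]; simpl; auto. Qed.

Lemma addAt_add k i s t : addAt (addAt k i s) i t = addAt k i (s + t).
Proof. revert i; induction k; intros [|i]; simpl; auto; f_equal; auto; lia. Qed.

Lemma addAt_0 k i : addAt k i 0 = k.
Proof. revert i; induction k; intros [|i]; simpl; auto; f_equal; auto; lia. Qed.

Lemma addAt_inv k m i s : addAt k i s = m -> k = addAt m i (-s).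
Proof.
  intros <-. rewrite addAt_add. replace (s + - s)%Z with 0%Z by lia.
  symmetry; apply addAt_0.
Qed.

Lemma valid_addAt nu k i s : valid nu k -> valid nu (addAt k i s).
Proof. unfold valid. rewrite addAt_length. auto. Qed.

(* Binary weight w(k) = sum_i k_i 2^i: a step along +-e_i changes it by +-2^i,
   so from a point of maximal weight, k + e_(nu-1) has all its neighbours
   except k itself of strictly larger weight. *)
Fixpoint weight (k : list Z) : Z :=
  match k with nil => 0%Z | x :: k' => (x + 2 * weight k')%Z end.

Lemma weight_addAt k i s : (i < length k)%nat ->
  weight (addAt k i s) = (weight k + s * 2 ^ Z.of_nat i)%Z.
Proof.
  revert i; induction k as [|x k IH]; intros [|i] H; simpl length in H; try lia.
  - simpl. lia.
  - change (addAt (x :: k) (S i) s) with (x :: addAt k i s).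
    change (weight (x :: addAt k i s)) with (x + 2 * weight (addAt k i s))%Z.
    change (weight (x :: k)) with (x + 2 * weight k)%Z.
    rewrite IH by lia. rewrite Nat2Z.inj_succ, Z.pow_succ_r by lia. lia.
Qed.

Lemma norm1_ge0 k : (0 <= norm1 k)%Z.
Proof. induction k; simpl; lia. Qed.

Lemma weight_bound k : (Z.abs (weight k) <= 2 ^ Z.of_nat (length k) * norm1 k)%Z.
Proof.
  induction k as [|x k IH]; [simpl; lia|].
  change (weight (x :: k)) with (x + 2 * weight k)%Z.
  change (norm1 (x :: k)) with (Z.abs x + norm1 k)%Z.
  change (length (x :: k)) with (S (length k)).
  rewrite Nat2Z.inj_succ, Z.pow_succ_r by lia.
  pose proof (norm1_ge0 k). pose proof (Z.pow_pos_nonneg 2 (Z.of_nat (length k))).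
  nia.
Qed.

Lemma exists_max {T : Type} (Q : T -> Prop) (f : T -> Z) B :
  (exists k, Q k) -> (forall k, Q k -> (f k <= B)%Z) ->
  exists k, Q k /\ forall k', Q k' -> (f k' <= f k)%Z.
Proof.
  intros [k0 H0] HB. apply NNPP. intros Hn.
  assert (Hs : forall k, Q k -> exists k', Q k' /\ (f k' > f k)%Z).
  { intros k Hk. apply NNPP. intros Hn2. apply Hn. exists k. split; auto.
    intros k' Hk'. apply Z.nlt_ge. intros Hl. apply Hn2. exists k'. split; auto; lia. }
  assert (Hi : forall n : nat, exists k, Q k /\ (f k >= f k0 + Z.of_nat n)%Z).
  { induction n as [|n [k [Hk Hf]]]; [exists k0; split; auto; lia|].
    destruct (Hs k Hk) as [k' [Hk' Hf']]. exists k'; split; auto; lia. }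
  destruct (Hi (Z.to_nat (B - f k0 + 1))) as [k [Hk Hf]].
  specialize (HB k Hk). lia.
Qed.

Lemma fold_zero (T : nat -> Cx) l a : (forall i, In i l -> T i = C0) ->
  fold_right (fun i acc => Cadd (T i) acc) a l = a.
Proof.
  induction l; simpl; intros H; auto. rewrite IHl, H; auto. apply Cx_eq; simpl; ring.
Qed.

Lemma J0_above_max_weight j u k : valid (S j) k ->
  (forall p, valid (S j) p -> (weight p > weight k)%Z -> u p = C0) ->
  J0 (S j) u (addAt k j 1) = u k.
Proof.
  intros Hk Hz. set (k' := addAt k j 1).
  assert (Hk' : valid (S j) k') by apply valid_addAt, Hk.
  assert (Hlen : forall i, (i <= j)%nat -> (i < length k')%nat)
    by (intros i Hi; unfold k'; rewrite addAt_length; unfold valid in Hk; lia).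
  assert (Hpos : forall i, (0 < 2 ^ Z.of_nat i)%Z) by (intros; apply Z.pow_pos_nonneg; lia).
  assert (Hwk' : weight k' = (weight k + 2 ^ Z.of_nat j)%Z)
    by (unfold k'; rewrite weight_addAt; unfold valid in Hk; lia).
  assert (Hback : addAt k' j (-1) = k) by (unfold k'; rewrite addAt_add; apply addAt_0).
  unfold J0. rewrite seq_S, fold_right_app. simpl. rewrite Hback.
  rewrite (Hz (addAt k' j 1)).
  2: apply valid_addAt, Hk'.
  2: rewrite weight_addAt by auto; specialize (Hpos j); lia.
  rewrite fold_zero; [apply Cx_eq; simpl; ring|].
  intros i Hi. apply in_seq in Hi.
  assert (Hpow : (2 ^ Z.of_nat i < 2 ^ Z.of_nat j)%Z) by (apply Z.pow_lt_mono_r; lia).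
  rewrite !Hz; try apply valid_addAt, Hk'.
  - apply Cx_eq; simpl; ring.
  - rewrite weight_addAt by (apply Hlen; lia). lia.
  - rewrite weight_addAt by (apply Hlen; lia). specialize (Hpos i). lia.
Qed.

(* Eigenvectors are not finitely supported: a point k of maximal weight in the
   support would give, by the eigen-equation at k + e_(nu-1), u(k) = 0. *)
Lemma eigvec_support_unbounded nu d u lam : (1 <= nu)%nat ->
  (forall k, valid nu k -> Jop nu d u k = Cmul lam (u k)) ->
  (exists k, valid nu k /\ u k <> C0) ->
  forall N, exists k, valid nu k /\ u k <> C0 /\ (norm1 k > N)%Z.
Proof.
  intros Hnu Hev Hex N. apply NNPP. intros Hbounded.
  destruct (exists_max (fun k => valid nu k /\ u k <> C0) weight
              (2 ^ Z.of_nat nu * Z.abs N)%Z Hex) as [k [[Hk Huk] Hmax]].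
  { intros k [Hv Hu]. pose proof (weight_bound k). pose proof (norm1_ge0 k).
    pose proof (Z.pow_pos_nonneg 2 (Z.of_nat nu)).
    assert (norm1 k <= N)%Z by (apply Z.nlt_ge; intros Hgt; apply Hbounded;
                                exists k; repeat split; auto; lia).
    unfold valid in Hv. rewrite Hv in *. nia. }
  assert (Hz : forall p, valid nu p -> (weight p > weight k)%Z -> u p = C0).
  { intros p Hp Hw. apply NNPP. intros Hu. specialize (Hmax p (conj Hp Hu)). lia. }
  destruct nu as [|j]; [lia|].
  pose proof (Hev _ (valid_addAt _ _ j 1 Hk)) as E. unfold Jop in E.
  rewrite J0_above_max_weight in E by auto.
  rewrite (Hz (addAt k j 1)) in E.
  - apply Huk. destruct (u k) as [a b]. simpl in E. injection E; intros.
    apply Cx_eq; simpl; lra.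
  - apply valid_addAt, Hk.
  - rewrite weight_addAt by (unfold valid in Hk; lia).
    pose proof (Z.pow_pos_nonneg 2 (Z.of_nat j)). lia.
Qed.

(** * Test vectors a u + b delta_m: the quadratic forms on a plane *)

Definition delta (m k : list Z) : Cx :=
  if list_eq_dec Z.eq_dec k m then RtoC 1 else C0.

Lemma delta_ne m k : k <> m -> delta m k = C0.
Proof. unfold delta; destruct (list_eq_dec Z.eq_dec k m); congruence. Qed.

Lemma delta_eq m : delta m m = RtoC 1.
Proof. unfold delta; destruct (list_eq_dec Z.eq_dec m m); congruence. Qed.

Lemma J0_lin nu u v a b k :
  J0 nu (fun x => Cadd (Cmul a (u x)) (Cmul b (v x))) k =
  Cadd (Cmul a (J0 nu u k)) (Cmul b (J0 nu v k)).
Proof.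
  unfold J0. induction (seq 0 nu); simpl; [|rewrite IHl]; apply Cx_eq; simpl; ring.
Qed.

Lemma Jop_lin nu d u v a b k :
  Jop nu d (fun x => Cadd (Cmul a (u x)) (Cmul b (v x))) k =
  Cadd (Cmul a (Jop nu d u k)) (Cmul b (Jop nu d v k)).
Proof. unfold Jop. rewrite J0_lin. apply Cx_eq; simpl; ring. Qed.

Lemma HS_delta_l P f m : P m -> HasSumOn P (fun k => Cmul (delta m k) (f k)) (f m).
Proof.
  intros Hm. replace (f m) with (Cmul (delta m m) (f m))
    by (rewrite delta_eq; apply Cx_eq; simpl; ring).
  apply (HS_single P (fun k => Cmul (delta m k) (f k))); auto.
  intros k _ Hk. rewrite delta_ne by auto. apply Cx_eq; simpl; ring.
Qed.

Lemma HS_delta_r P f m :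
  P m -> HasSumOn P (fun k => Cmul (f k) (Cconj (delta m k))) (f m).
Proof.
  intros Hm. replace (f m) with (Cmul (f m) (Cconj (delta m m)))
    by (rewrite delta_eq; apply Cx_eq; simpl; ring).
  apply (HS_single P (fun k => Cmul (f k) (Cconj (delta m k)))); auto.
  intros k _ Hk. rewrite delta_ne by auto. apply Cx_eq; simpl; ring.
Qed.

Lemma HS_delta_shift P f m i s : P (addAt m i (- s)) ->
  HasSumOn P (fun k => Cmul (delta m (addAt k i s)) (f k)) (f (addAt m i (- s))).
Proof.
  intros Hp. set (p := addAt m i (- s)).
  replace (f p) with (Cmul (delta m (addAt p i s)) (f p)).
  - apply (HS_single P (fun k => Cmul (delta m (addAt k i s)) (f k))); auto.
    intros k _ Hk. rewrite delta_ne.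
    + apply Cx_eq; simpl; ring.
    + intros H. apply Hk, addAt_inv, H.
  - unfold p. rewrite addAt_add, Z.add_opp_diag_l, addAt_0, delta_eq.
    apply Cx_eq; simpl; ring.
Qed.

Lemma HS_zero P : HasSumOn P (fun _ => C0) C0.
Proof. apply (HS_fin P (fun _ => C0) []); constructor. Qed.

Lemma HS_fold P (T : nat -> list Z -> Cx) (v : nat -> Cx) l :
  (forall i, In i l -> HasSumOn P (T i) (v i)) ->
  HasSumOn P (fun k => fold_right (fun i acc => Cadd (T i k) acc) C0 l)
             (fold_right (fun i acc => Cadd (v i) acc) C0 l).
Proof.
  induction l as [|i l IH]; intros H; simpl; [apply HS_zero|].
  apply HS_add; [apply H; simpl; auto|]. apply IH. intros j Hj. apply H; simpl; auto.
Qed.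

Lemma Cmul_fold_r (a b : nat -> Cx) c l :
  Cmul (fold_right (fun i acc => Cadd (Cadd (a i) (b i)) acc) C0 l) c =
  fold_right (fun i acc => Cadd (Cadd (Cmul (a i) c) (Cmul (b i) c)) acc) C0 l.
Proof.
  induction l; simpl; [|rewrite <- IHl]; apply Cx_eq; simpl; ring.
Qed.

Lemma Cconj_fold (a b : nat -> Cx) l :
  Cconj (fold_right (fun i acc => Cadd (Cadd (a i) (b i)) acc) C0 l) =
  fold_right (fun i acc => Cadd (Cadd (Cconj (b i)) (Cconj (a i))) acc) C0 l.
Proof.
  induction l; simpl; [|rewrite <- IHl]; apply Cx_eq; simpl; ring.
Qed.

(* <J delta_m, u> = conj ((J^* u)(m)) where J^* = J0 + conj d. *)
Definition coupling (nu : nat) (d u : list Z -> Cx) (m : list Z) : Cx :=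
  Cadd (Cconj (J0 nu u m)) (Cmul (d m) (Cconj (u m))).

(* Each neighbour term of J delta_m pairs u with a translate of delta_m. *)
Lemma HS_coupling nu d u m : valid nu m ->
  HasSumOn (valid nu) (fun k => Cmul (Jop nu d (delta m) k) (Cconj (u k)))
    (coupling nu d u m).
Proof.
  intros Hm. unfold coupling, J0. rewrite Cconj_fold.
  apply HS_ext with (f := fun k => Cadd
    (fold_right (fun i acc => Cadd (Cadd (Cmul (delta m (addAt k i 1%Z)) (Cconj (u k)))
                              (Cmul (delta m (addAt k i (-1)%Z)) (Cconj (u k)))) acc)
       C0 (seq 0 nu))
    (Cmul (delta m k) (Cmul (d k) (Cconj (u k))))).
  - intros k _. unfold Jop, J0. rewrite <- Cmul_fold_r. apply Cx_eq; simpl; ring.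
  - apply HS_add; [|apply HS_delta_l; auto].
    apply HS_fold. intros i Hi. apply in_seq in Hi.
    apply HS_add; apply (HS_delta_shift _ (fun k => Cconj (u k)));
      apply valid_addAt; auto.
Qed.

Definition sesq (a b AU AV BU BV : Cx) : Cx :=
  Cadd (Cadd (Cadd (Cmul (Cmul a (Cconj a)) AU) (Cmul (Cmul a (Cconj b)) AV))
             (Cmul (Cmul b (Cconj a)) BU)) (Cmul (Cmul b (Cconj b)) BV).

Lemma HS_sesq P (A B U V : list Z -> Cx) a b AU AV BU BV :
  HasSumOn P (fun k => Cmul (A k) (Cconj (U k))) AU ->
  HasSumOn P (fun k => Cmul (A k) (Cconj (V k))) AV ->
  HasSumOn P (fun k => Cmul (B k) (Cconj (U k))) BU ->
  HasSumOn P (fun k => Cmul (B k) (Cconj (V k))) BV ->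
  HasSumOn P (fun k => Cmul (Cadd (Cmul a (A k)) (Cmul b (B k)))
                           (Cconj (Cadd (Cmul a (U k)) (Cmul b (V k)))))
             (sesq a b AU AV BU BV).
Proof.
  intros H1 H2 H3 H4. unfold sesq.
  eapply HS_ext; [|repeat apply HS_add; apply HS_scale; eassumption].
  intros k _. apply Cx_eq; simpl; ring.
Qed.

Lemma test_vector_forms nu d u lam S m a b : valid nu m ->
  (forall k, valid nu k -> Jop nu d u k = Cmul lam (u k)) ->
  HasSumOn (valid nu) (fun k => RtoC (Cnorm (u k) ^ 2)) S ->
  let x := fun k => Cadd (Cmul a (u k)) (Cmul b (delta m k)) in
  HasSumOn (valid nu) (fun k => RtoC (Cnorm (x k) ^ 2))
    (sesq a b S (u m) (Cconj (u m)) (RtoC 1)) /\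
  HasSumOn (valid nu) (fun k => Cmul (Jop nu d x k) (Cconj (x k)))
    (sesq a b (Cmul lam S) (Cmul lam (u m)) (coupling nu d u m) (Jop nu d (delta m) m)).
Proof.
  intros Hm Hev HS x.
  assert (Huu : HasSumOn (valid nu) (fun k => Cmul (u k) (Cconj (u k))) S).
  { eapply HS_ext; [|exact HS]. intros k _. apply RtoC_Cnorm_sq. }
  split.
  - eapply HS_ext; [intros k _; symmetry; apply RtoC_Cnorm_sq|].
    apply HS_sesq; [exact Huu | apply HS_delta_r; auto
                   | apply (HS_delta_l _ (fun k => Cconj (u k))); auto |].
    rewrite <- (delta_eq m). apply HS_delta_r; auto.
  - assert (HJu : HasSumOn (valid nu) (fun k => Cmul (Jop nu d u k) (Cconj (u k)))
                            (Cmul lam S)).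
    { eapply HS_ext; [|apply (HS_scale _ _ _ lam Huu)].
      intros k Hk. simpl. rewrite Hev by auto. apply Cx_eq; simpl; ring. }
    assert (HJum : HasSumOn (valid nu)
              (fun k => Cmul (Jop nu d u k) (Cconj (delta m k))) (Cmul lam (u m))).
    { rewrite <- Hev by auto. apply HS_delta_r; auto. }
    eapply HS_ext; [|apply (HS_sesq _ _ _ _ _ a b _ _ _ _ HJu HJum
                       (HS_coupling nu d u m Hm) (HS_delta_r _ _ _ Hm))].
    intros k _. unfold x. rewrite Jop_lin. reflexivity.
Qed.

(** * Numerical range of a 2 x 2 compression *)

(* Gram-Schmidt on the plane spanned by u and delta_m: writing
   a u + q delta_m = p u + q (delta_m - conj(u m)/||u||^2 u), both forms of
   test_vector_forms diagonalize; rho = 1 - |u m|^2/s is ||delta_m - ...||^2. *)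
Lemma gram_schmidt_forms (s p : R) (q g lam bb mu : Cx) : s <> 0 ->
  let a := Csub (RtoC p) (Cmul (RtoC (/ s)) (Cmul q (Cconj g))) in
  sesq a q (RtoC s) g (Cconj g) (RtoC 1) =
    RtoC (s * p * p + (1 - Cnorm2 g / s) * Cnorm2 q) /\
  sesq a q (Cmul lam (RtoC s)) (Cmul lam g) bb mu =
    Cadd (Cadd (Cmul lam (RtoC (s * p * p)))
               (Cmul (RtoC p) (Cmul q (Csub bb (Cmul lam (Cconj g))))))
         (Cmul (RtoC (Cnorm2 q)) (Csub mu (Cmul (RtoC (/ s)) (Cmul bb g)))).
Proof.
  intros Hs a. unfold a, sesq, Cnorm2.
  split; apply Cx_eq; simpl; field; auto.
Qed.

(* The equation alpha t (1 - t) = rho |e + t k|^2 has a root t in [0, 1/2]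
   whenever e is small: the left side wins at a small t0 > 0, loses at 0. *)
Lemma small_root (alpha rho kr ki : R) : alpha > 0 -> rho > 0 ->
  exists delta, delta > 0 /\ forall er ei, er * er + ei * ei < delta ->
    exists t, 0 <= t <= 1/2 /\
      alpha * t * (1 - t) =
        rho * ((er + t * kr) * (er + t * kr) + (ei + t * ki) * (ei + t * ki)).
Proof.
  intros Ha Hr. set (K := kr * kr + ki * ki).
  assert (HK : 0 <= K) by (unfold K; nra).
  set (t0 := Rmin (1/2) (alpha / (8 * rho * (K + 1)))).
  assert (Ht0 : 0 < t0).
  { apply Rmin_glb_lt; [lra|]. apply Rdiv_lt_0_compat; [lra|nra]. }
  assert (Ht0h : t0 <= 1/2) by apply Rmin_l.
  assert (Ht0a : t0 * (8 * rho * (K + 1)) <= alpha).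
  { pose proof (Rmin_r (1/2) (alpha / (8 * rho * (K + 1)))) as H. fold t0 in H.
    apply (Rmult_le_compat_r (8 * rho * (K + 1))) in H; [|nra].
    replace (alpha / (8 * rho * (K + 1)) * (8 * rho * (K + 1))) with alpha in H
      by (field; nra). exact H. }
  exists (alpha * t0 / (8 * rho)). split; [apply Rdiv_lt_0_compat; nra|].
  intros er ei Hsmall.
  assert (Hsmall' : 8 * rho * (er * er + ei * ei) < alpha * t0).
  { apply (Rmult_lt_compat_l (8 * rho)) in Hsmall; [|lra].
    replace (8 * rho * (alpha * t0 / (8 * rho))) with (alpha * t0) in Hsmall
      by (field; lra). lra. }
  set (G := fun t => alpha * t * (1 - t) -
          rho * ((er + t * kr) * (er + t * kr) + (ei + t * ki) * (ei + t * ki))).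
  assert (HG0 : G 0 <= 0) by (unfold G; nra).
  assert (HGt0 : G t0 > 0).
  { unfold G.
    assert (Sq : (er + t0 * kr) * (er + t0 * kr) + (ei + t0 * ki) * (ei + t0 * ki)
                 <= 2 * (er * er + ei * ei) + 2 * (t0 * t0 * K)).
    { unfold K. pose proof (pow2_ge_0 (er - t0 * kr)).
      pose proof (pow2_ge_0 (ei - t0 * ki)). nra. }
    assert (Small_t0 : 8 * rho * (t0 * t0 * K) <= alpha * t0).
    { apply Rmult_le_compat_l with (r := t0) in Ht0a; [|lra].
      assert (0 <= 8 * rho * (t0 * t0)) by nra. nra. }
    assert (Left : alpha * t0 / 2 <= alpha * t0 * (1 - t0)).
    { assert (0 <= alpha * t0 * (1/2 - t0)) by (apply Rmult_le_pos; nra). nra. }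
    apply Rmult_le_compat_l with (r := rho) in Sq; lra. }
  destruct (IVT_cor G 0 t0) as [t [[Ht1 Ht2] HGt]].
  - intros x. unfold G. reg.
  - lra.
  - nra.
  - exists t. split; [lra|]. unfold G in HGt. lra.
Qed.

(* The numerical range of the compression
     (p, q) |-> lam s p^2 + p q c + |q|^2 e   on   s p^2 + rho |q|^2 = 1
   contains a disk around lam as soon as the off-diagonal entry c is nonzero
   (lam is then a focus, hence an interior point, of the elliptic range). *)
Lemma compression_range_disk (s rho : R) (lam c e : Cx) :
  s > 0 -> rho > 0 -> Cnorm2 c > 0 ->
  exists eps, eps > 0 /\ forall w, Cnorm (Csub w lam) < eps ->
    exists (p : R) (q : Cx), s * p * p + rho * Cnorm2 q = 1 /\
      Cadd (Cadd (Cmul lam (RtoC (s * p * p))) (Cmul (RtoC p) (Cmul q c)))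
           (Cmul (RtoC (Cnorm2 q)) e) = w.
Proof.
  intros Hs Hrho Hc. set (C2 := Cnorm2 c).
  set (kr := Re lam - Re e / rho). set (ki := Im lam - Im e / rho).
  destruct (small_root (C2 / s) rho kr ki) as [delta [Hdelta Hroot]];
    [apply Rdiv_lt_0_compat; auto | auto |].
  exists (sqrt delta). split; [apply sqrt_lt_R0; auto|].
  intros w Hw.
  set (er := Re w - Re lam). set (ei := Im w - Im lam).
  assert (Hsmall : er * er + ei * ei < delta).
  { pose proof (Cnorm_sq (Csub w lam)) as H. pose proof (Cnorm_ge0 (Csub w lam)).
    pose proof (sqrt_sqrt delta ltac:(lra)). pose proof (sqrt_pos delta).
    unfold Cnorm2 in H. simpl in H. unfold er, ei. nra. }
  destruct (Hroot er ei Hsmall) as [t [Ht Heq]].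
  set (rr := er + t * kr) in Heq. set (ri := ei + t * ki) in Heq.
  set (p := sqrt ((1 - t) / s)).
  assert (Hp2 : p * p = (1 - t) / s)
    by (apply sqrt_sqrt, Rle_mult_inv_pos; lra).
  assert (Hp : p > 0) by (apply sqrt_lt_R0, Rdiv_lt_0_compat; lra).
  set (qr := (rr * Re c + ri * Im c) / (p * C2)).
  set (qi := (ri * Re c - rr * Im c) / (p * C2)).
  assert (HC2 : C2 = Re c * Re c + Im c * Im c) by reflexivity.
  assert (HC2pos : Re c * Re c + Im c * Im c > 0) by exact Hc.
  assert (Hpqc_r : p * (qr * Re c - qi * Im c) = rr)
    by (unfold qr, qi; rewrite HC2 in *; field; split; lra).
  assert (Hpqc_i : p * (qr * Im c + qi * Re c) = ri)
    by (unfold qr, qi; rewrite HC2 in *; field; split; lra).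
  assert (Hq2 : Cnorm2 (mkC qr qi) = t / rho).
  { assert (Hrr : rr * rr + ri * ri = C2 / s * t * (1 - t) / rho)
      by (rewrite Heq; field; lra).
    transitivity ((rr * rr + ri * ri) / (p * p * C2)).
    - unfold Cnorm2, qr, qi. simpl. rewrite HC2 in *. field. split; lra.
    - rewrite Hrr, Hp2. field. repeat split; lra. }
  assert (Hsp : s * p * p = 1 - t) by (rewrite Rmult_assoc, Hp2; field; lra).
  exists p, (mkC qr qi). rewrite Hq2, Hsp. split.
  - field. lra.
  - apply Cx_eq; simpl.
    + rewrite Hpqc_r. unfold rr, er, kr. field. lra.
    + rewrite Hpqc_i. unfold ri, ei, ki. field. lra.
Qed.

(** * Eigenvalues with an off-axis support point are interior to Num(J) *)

(* Since J u = lam u and J^* = J - 2 i Im d, the defect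
   <(J - lam) delta_m, u> = 2 i (Im d(m) - Im lam) conj(u m) is nonzero. *)
Lemma coupling_defect_nonzero nu d u lam m :
  Jop nu d u m = Cmul lam (u m) -> u m <> C0 -> Im (d m) <> Im lam ->
  Cnorm2 (Csub (coupling nu d u m) (Cmul lam (Cconj (u m)))) > 0.
Proof.
  intros Hev Hum Hdm. pose proof (Cnorm2_pos _ Hum) as Hpos.
  unfold Jop in Hev. unfold coupling, Cnorm2 in *.
  destruct (J0 nu u m) as [jr ji], (u m) as [gr gi], (d m) as [dr di], lam as [lr li].
  simpl in *. injection Hev as E1 E2.
  assert (HR : jr + (dr * gr - di * - gi) - (lr * gr - li * - gi) = 2 * gi * (di - li))
    by lra.
  assert (HI : - ji + (dr * - gi + di * gr) - (lr * - gi + li * gr) = 2 * gr * (di - li))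
    by lra.
  rewrite HR, HI.
  assert (0 < (di - li) * (di - li)) by (assert (di - li <> 0) by lra; nra).
  nra.
Qed.

(* If u is an eigenvector and some entry u(m) carries only part of the norm
   while Im d(m) <> Im lam, then Num(J) contains a disk around lam: it
   contains the range of the compression of J to span(u, delta_m). *)
Lemma eigenvalue_interior nu d u lam s m : valid nu m ->
  (forall k, valid nu k -> Jop nu d u k = Cmul lam (u k)) ->
  HasSumOn (valid nu) (fun k => RtoC (Cnorm (u k) ^ 2)) (RtoC s) ->
  Cnorm2 (u m) < s -> u m <> C0 -> Im (d m) <> Im lam ->
  in_interior (NumRange nu d) lam.
Proof.
  intros Hm Hev HS Hlt Hum Hdm.
  pose proof (Cnorm2_pos _ Hum) as Hg.
  assert (Hrho : 1 - Cnorm2 (u m) / s > 0).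
  { replace (1 - Cnorm2 (u m) / s) with ((s - Cnorm2 (u m)) / s) by (field; lra).
    apply Rdiv_lt_0_compat; lra. }
  destruct (compression_range_disk s (1 - Cnorm2 (u m) / s) lam
              (Csub (coupling nu d u m) (Cmul lam (Cconj (u m))))
              (Csub (Jop nu d (delta m) m) (Cmul (RtoC (/ s)) (Cmul (coupling nu d u m) (u m)))))
    as [eps [Heps Hdisk]]; auto using coupling_defect_nonzero; [lra|].
  exists eps. split; auto. intros w Hw.
  destruct (Hdisk w Hw) as [p [q [Hnorm Hval]]].
  destruct (gram_schmidt_forms s p q (u m) lam (coupling nu d u m)
              (Jop nu d (delta m) m) ltac:(lra)) as [GN GQ].
  destruct (test_vector_forms nu d u lam (RtoC s) m
              (Csub (RtoC p) (Cmul (RtoC (/ s)) (Cmul q (Cconj (u m))))) q Hm Hev HS)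
    as [HN HQ].
  rewrite GN, Hnorm in HN. rewrite GQ, Hval in HQ.
  eexists. split; [exact HN | exact HQ].
Qed.

Theorem mainTheorem7 (nu : nat) (d : list Z -> Cx) :
  (1 <= nu)%nat ->
  (exists M : R, forall k, valid nu k -> Cnorm (d k) <= M) ->
  (forall eps : R, eps > 0 -> exists N : Z,
     forall k, valid nu k -> (norm1 k > N)%Z -> Rabs (Im (d k)) < eps) ->
  forall lam : Cx, boundary_eigenvalue nu d lam -> Im lam = 0.
Proof.
  intros Hnu _ Himd lam [[u [[S HS] [Hsupp Hev]]] [_ Hboundary]].
  destruct (Req_dec (Im lam) 0) as [|Hlam]; [assumption|exfalso].
  pose proof (eigvec_support_unbounded nu d u lam Hnu Hev Hsupp) as Hfar.
  (* a support point m far enough out that |Im d(m)| < |Im lam| *)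
  destruct (Himd (Rabs (Im lam))) as [N HN]; [apply Rabs_pos_lt; auto|].
  destruct (Hfar N) as [m [Hm [Hum HmN]]].
  assert (Hdm : Im (d m) <> Im lam)
    by (intros E; specialize (HN m Hm HmN); rewrite E in HN; lra).
  (* a second support point k1, so that |u m|^2 < ||u||^2 *)
  destruct (Hfar (norm1 m)) as [k1 [Hk1 [Hu1 Hk1m]]].
  assert (Hne : k1 <> m) by (intros ->; lia).
  assert (Hpair : NoDup [m; k1])
    by (repeat constructor; simpl; intuition).
  destruct (HS_lower (valid nu) (fun k => Cnorm (u k) ^ 2) S [m; k1]) as [HIm HRe];
    auto using pow2_ge_0.
  simpl in HRe. rewrite !Rmult_1_r, !Cnorm_sq in HRe.
  pose proof (Cnorm2_pos _ Hu1).
  replace S with (RtoC (Re S)) in HS by (apply Cx_eq; simpl; auto).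
  apply Hboundary, (eigenvalue_interior nu d u lam (Re S) m); auto. lra.
Qed.
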